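(* Let $(\mathfrak{A},\varphi,\tau)$ be an ergodic $*$-dynamical system, and let $A,B\in\mathfrak{A}$ and $\varepsilon>0$. Then the set $$E=\left\{k\in\mathbb{N}:\left|\varphi\left(A\tau^{k}(B)\right)\right|>\left|\varphi(A)\varphi(B)\right|-\varepsilon\right\}$$ is relatively dense in $\mathbb{N}=\{1,2,3,\dots\}$.
   Context: All algebras are over $\mathbb{C}$. A unital $*$-algebra is a complex algebra with an involution $*$ and a unit $1$. A state on a unital $*$-algebra $\mathfrak{A}$ is a linear functional $\varphi$ with $\varphi(A^*A)\ge 0$ for all $A$ and $\varphi(1)=1$. A $*$-dynamical system is a triple $(\mathfrak{A},\varphi,\tau)$ where $\mathfrak{A}$ is a unital $*$-algebra, $\varphi$ is a state on $\mathfrak{A}$, and $\tau:\mathfrak{A}\to\mathfrak{A}$ is a linear map (not necessarily multiplicative) with $\tau(1)=1$ and $\varphi(\tau(A)^*\tau(A))\le\varphi(A^*A)$ for all $A\in\mathfrak{A}$. Define the seminorm $\|A\|_\varphi=\sqrt{\varphi(A^*A)}$; scalars $\alpha\in\mathbb{C}$ are identified with $\alpha 1\in\mathfrak{A}$. The system is called ergodic if: for every sequence $(A_n)$ in $\mathfrak{A}$ such that $\|\tau(A_n)-A_n\|_\varphi\to0$ and such that for every $\varepsilon>0$ there is $N$ with $\|A_m-A_n\|_\varphi\le\varepsilon$ for all $m,n>N$, there exists $\alpha\in\mathbb{C}$ with $\|A_n-\alpha\|_\varphi\to0$. A set $E\subseteq\mathbb{N}$ is relatively dense in $\mathbb{N}$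 if there exists $n\in\mathbb{N}$ such that $E\cap\{j,j+1,\dots,j+n-1\}\neq\emptyset$ for every $j\in\mathbb{N}$. *)

(* the complex numbers are R[i] = complex R for R : realType
   (real-closed's complex.v); any realType is (isomorphic to) the reals. *)
From HB Require Import structures.
From mathcomp Require Import all_boot all_order all_algebra.
From mathcomp Require Import complex.
From mathcomp Require Import reals.
Set Implicit Arguments. Unset Strict Implicit. Unset Printing Implicit Defensive.
Import Order.TTheory GRing.Theory Num.Theory.
Local Open Scope ring_scope.

Section StarDyn.
Variable R : realType.
Local Notation C := (R[i]).
Variable A : algType C.

Definition is_involution (star : A -> A) : Prop :=
  [/\ forall x y, star (x + y) = star x + star y,
      forall (c : C) x, star (c *: x) = (c^*)%C *: star x,
      forall x y, star (x * y) = star y * star x &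
      forall x, star (star x) = x].

Definition is_state (star : A -> A) (phi : A -> C) : Prop :=
  [/\ forall x y, phi (x + y) = phi x + phi y,
      forall (c : C) x, phi (c *: x) = c * phi x,
      forall x, 0 <= phi (star x * x) &
      phi 1 = 1].

Definition phinorm (star : A -> A) (phi : A -> C) (x : A) : R :=
  Num.sqrt (complex.Re (phi (star x * x))).

Definition is_star_dyn (star : A -> A) (phi : A -> C) (tau : A -> A) : Prop :=
  [/\ is_involution star, is_state star phi,
      (forall x y, tau (x + y) = tau x + tau y) /\
        (forall (c : C) x, tau (c *: x) = c *: tau x),
      tau 1 = 1 &
      forall x, phi (star (tau x) * tau x) <= phi (star x * x)].

Definition ergodic (star : A -> A) (phi : A -> C) (tau : A -> A) : Prop :=
  forall An : nat -> A,
    (forall e : R, 0 < e -> exists N : nat, forall n : nat, (N < n)%N ->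
        phinorm star phi (tau (An n) - An n) <= e) ->
    (forall e : R, 0 < e -> exists N : nat, forall m n : nat,
        (N < m)%N -> (N < n)%N -> phinorm star phi (An m - An n) <= e) ->
    exists alpha : C,
      forall e : R, 0 < e -> exists N : nat, forall n : nat, (N < n)%N ->
        phinorm star phi (An n - alpha%:A) <= e.

End StarDyn.

Definition rel_dense_pos (E : nat -> Prop) : Prop :=
  exists n : nat, (0 < n)%N /\
    forall j : nat, (0 < j)%N ->
      exists k : nat, E k /\ (j <= k)%N /\ (k <= j + n - 1)%N.

Definition cabs (R : realType) (z : R[i]) : R := Normc.normc z.

From HB Require Import structures.
From mathcomp Require Import all_boot all_order all_algebra.
From mathcomp Require Import complex.
From mathcomp Require Import classical_sets reals.
From mathcomp Require Import ring lra zify.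
Import Order.TTheory GRing.Theory Num.Theory.
Local Open Scope complex_scope.
Local Open Scope ring_scope.
Local Open Scope classical_set_scope.
Set Implicit Arguments. Unset Strict Implicit. Unset Printing Implicit Defensive.

(* The form <x, y> = phi (x^* y) is positive semidefinite and Hermitian, so
   ||.||_phi obeys Cauchy-Schwarz and the parallelogram law, and the
   contraction tau fixing 1 must preserve phi.  The averages
   M_n b = n^-1 \sum_(k < n) tau^k b are almost tau-invariant and form a Cauchy
   sequence: in the convex set of those y whose averages approach those of b
   at rate O(1/n), the norms of the M_n b tend to the infimum, and by the
   parallelogram law near-minimisers are close to each other.  Ergodicity then
   makes M_n b converge to a scalar, necessarily phi b.  Fix N with
   ||a^*|| ||M_N b - phi b|| < eps.  For every j, phi (a tau^j (M_N b)) lies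
   within eps of phi a * phi b and is the mean of the phi (a tau^(j+i) b),
   i < N, so one of the N consecutive integers j + i lies in E. *)

Local Notation Re := complex.Re.

Lemma quadratic_ge0_discr (R : realFieldType) (a p c : R) : 0 <= c ->
  (forall t, 0 <= a + 2 * t * p + t ^+ 2 * c) -> p ^+ 2 <= a * c.
Proof.
move=> c0 quad_ge0.
have [c_eq0|c_neq0] := eqVneq c 0.
  suff -> : p = 0 by rewrite c_eq0 expr0n mulr0.
  apply/eqP/negPn/negP => p_neq0.
  have := quad_ge0 (- (a + 1) / (2 * p)).
  have a0 : 0 <= a by have := quad_ge0 0; rewrite !(mulr0, mul0r, expr0n) !addr0.
  have -> : 2 * (- (a + 1) / (2 * p)) * p = - (a + 1) by field.
  rewrite c_eq0 mulr0; lra.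
have c_gt0 : 0 < c by rewrite lt_neqAle eq_sym c_neq0.
have := quad_ge0 (- p / c).
have -> : a + 2 * (- p / c) * p + (- p / c) ^+ 2 * c = (a * c - p ^+ 2) / c by field.
by rewrite pmulr_lge0 ?invr_gt0 // subr_ge0.
Qed.

Lemma eventually_div_le (R : archiFieldType) (K d : R) : 0 < d ->
  exists N : nat, forall n : nat, (N < n)%N -> K / n%:R <= d.
Proof.
move=> d0; exists (Num.bound (`|K| / d)) => n ltNn.
have n_gt0 : 0 < n%:R :> R by rewrite ltr0n (leq_ltn_trans _ ltNn).
rewrite ler_pdivrMr //; apply: le_trans (ler_norm K) _.
rewrite mulrC -ler_pdivrMr //; apply/ltW/(lt_le_trans (archi_boundP _)).
  by rewrite divr_ge0 // ltW.
by rewrite ler_nat ltnW.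
Qed.

Section NormcFacts.
Variable R : rcfType.

Lemma normc_ge0 (z : R[i]) : 0 <= Normc.normc z.
Proof. by case: z => a b; apply: sqrtr_ge0. Qed.

Lemma normc_real (r : R) : Normc.normc r%:C = `|r|.
Proof. by rewrite /= expr0n addr0 sqrtr_sqr. Qed.

Lemma normc_conj (z : R[i]) : Normc.normc z^* = Normc.normc z.
Proof. by case: z => a b /=; rewrite sqrrN. Qed.

Lemma Re_conjM (z : R[i]) : Re (z^* * z) = Normc.normc z ^+ 2.
Proof. by case: z => a b /=; rewrite sqr_sqrtr ?addr_ge0 ?sqr_ge0 //; ring. Qed.

Lemma normc_sum (I : Type) (r : seq I) (F : I -> R[i]) :
  Normc.normc (\sum_(i <- r) F i) <= \sum_(i <- r) Normc.normc (F i).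
Proof.
elim/big_rec2: _ => [|i y s _ le_ys]; first by rewrite Normc.normc0.
by apply: le_trans (le_normcD _ _) _; rewrite lerD2l.
Qed.

Lemma exists_normc_gt_mean n (z : 'I_n -> R[i]) (L : R) : (0 < n)%N ->
  L < Normc.normc ((n%:R^-1 : R)%:C * \sum_i z i) -> exists i, L < Normc.normc (z i).
Proof.
move=> n_gt0 lt_L; have [i|z_le] := pickP (fun i => L < Normc.normc (z i)).
  by exists i.
exfalso; have n_gt0' : 0 < n%:R :> R by rewrite ltr0n.
move: lt_L; rewrite Normc.normcM normc_real ger0_norm ?invr_ge0 ?ler0n // mulrC.
rewrite ltr_pdivlMr // ltNge => /negP; apply; apply: le_trans (normc_sum _ _) _.
rewrite mulr_natr -[X in _ *+ X]card_ord -sumr_const; apply: ler_sum => i _.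
by rewrite leNgt z_le.
Qed.

End NormcFacts.

Lemma scale_invn_muln (R : rcfType) (V : lmodType R[i]) m (v : V) :
  (0 < m)%N -> (m%:R^-1 : R)%:C *: (v *+ m) = v.
Proof.
move=> m_gt0; rewrite -scaler_nat scalerA -(rmorph_nat (real_complex R)) -rmorphM /=.
by rewrite mulVf ?scale1r // pnatr_eq0 -lt0n.
Qed.

Section SemiInnerProduct.
Variable R : realType.
Local Notation C := R[i].
Variables (A : algType C) (star : A -> A) (phi : A -> C).
Hypotheses (star_inv : is_involution star) (phi_state : is_state star phi).
Local Notation nm := (phinorm star phi).

Lemma starD x y : star (x + y) = star x + star y.
Proof. by case: star_inv. Qed.
Lemma starZ c x : star (c *: x) = (c^*)%C *: star x.
Proof. by case: star_inv. Qed.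
Lemma starM x y : star (x * y) = star y * star x.
Proof. by case: star_inv. Qed.
Lemma starK x : star (star x) = x.
Proof. by case: star_inv. Qed.
Lemma star1 : star 1 = 1.
Proof. by have := starM (star 1) 1; rewrite mulr1 !starK mulr1 => <-. Qed.

Lemma phi_is_linear : linear_for *%R phi.
Proof. by case: phi_state => phiD phiZ _ _ c x y; rewrite phiD phiZ. Qed.
HB.instance Definition _ := GRing.isLinear.Build C A C *%R phi phi_is_linear.

Lemma phi1 : phi 1 = 1.
Proof. by case: phi_state. Qed.

Lemma phi_alg c : phi c%:A = c.
Proof. by rewrite linearZ /= phi1 mulr1. Qed.

Definition dotp x y := phi (star x * y).

Lemma dotpDl x y z : dotp (x + y) z = dotp x z + dotp y z.
Proof. by rewrite /dotp starD mulrDl linearD. Qed.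
Lemma dotpDr x y z : dotp x (y + z) = dotp x y + dotp x z.
Proof. by rewrite /dotp mulrDr linearD. Qed.
Lemma dotpZl c x y : dotp (c *: x) y = (c^*)%C * dotp x y.
Proof. by rewrite /dotp starZ -scalerAl linearZ. Qed.
Lemma dotpZr c x y : dotp x (c *: y) = c * dotp x y.
Proof. by rewrite /dotp -scalerAr linearZ. Qed.
Lemma dotpNr x y : dotp x (- y) = - dotp x y.
Proof. by rewrite /dotp mulrN linearN. Qed.
Lemma dotp1l y : dotp 1 y = phi y.
Proof. by rewrite /dotp star1 mul1r. Qed.

Lemma dotp_self_ge0 x : 0 <= dotp x x.
Proof. by case: phi_state => _ _ + _; apply. Qed.

Lemma dotpC x y : dotp y x = ((dotp x y)^*)%C.
Proof.
have := dotp_self_ge0 (x + y); have := dotp_self_ge0 (x + 'i%C *: y).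
have := dotp_self_ge0 x; have := dotp_self_ge0 y.
rewrite !(dotpDl, dotpDr, dotpZl, dotpZr).
case: (dotp x x) (dotp y y) (dotp x y) (dotp y x) => [a1 b1] [a2 b2] [a3 b3] [a4 b4].
(* Positivity makes <x + y, x + y> and <x + iy, x + iy> real. *)
rewrite !lecE /= => /andP[/eqP Im_yy _] /andP[/eqP Im_xx _] /andP[/eqP Im_xiy _].
move=> /andP[/eqP Im_xy _].
by apply/eqP; rewrite eq_complex /=; apply/andP; split; apply/eqP; lra.
Qed.

Lemma phinorm_ge0 x : 0 <= nm x.
Proof. exact: sqrtr_ge0. Qed.

Lemma dotp_self x : dotp x x = (nm x ^+ 2)%:C.
Proof.
have := dotp_self_ge0 x; rewrite /phinorm -/(dotp x x) lecE.
by case: (dotp x x) => r s /= /andP[/eqP -> r0]; rewrite sqr_sqrtr.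
Qed.

Lemma sqr_phinorm x : nm x ^+ 2 = Re (dotp x x).
Proof. by rewrite dotp_self. Qed.

Lemma sqr_phinormD x y :
  nm (x + y) ^+ 2 = nm x ^+ 2 + nm y ^+ 2 + 2 * Re (dotp x y).
Proof.
rewrite !sqr_phinorm dotpDl !dotpDr (dotpC x y).
by case: (dotp x x) (dotp y y) (dotp x y) => [a1 b1] [a2 b2] [a3 b3] /=; ring.
Qed.

Lemma phinormZ c x : nm (c *: x) = Normc.normc c * nm x.
Proof.
case: c => a b; apply/eqP; rewrite -(@eqrXn2 _ 2) ?mulr_ge0 ?phinorm_ge0 ?sqrtr_ge0 //.
rewrite exprMn sqr_phinorm dotpZl dotpZr dotp_self; set n := nm x ^+ 2.
by rewrite /= sqr_sqrtr ?addr_ge0 ?sqr_ge0 //; apply/eqP; ring.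
Qed.

Lemma phinormN x : nm (- x) = nm x.
Proof. by rewrite -scaleN1r phinormZ normcN Normc.normc1 mul1r. Qed.

Lemma phinorm0 : nm 0 = 0.
Proof. by rewrite /phinorm mulr0 linear0 sqrtr0. Qed.

Lemma phinorm1 : nm 1 = 1.
Proof. by rewrite /phinorm -/(dotp 1 1) dotp1l phi1 sqrtr1. Qed.

Lemma phinorm_realZ (r : R) x : 0 <= r -> nm (r%:C *: x) = r * nm x.
Proof. by move=> r0; rewrite phinormZ normc_real ger0_norm. Qed.

Lemma sqr_phinorm_addZ x y (t : R) :
  nm (x + t%:C *: y) ^+ 2 = nm x ^+ 2 + 2 * t * Re (dotp x y) + t ^+ 2 * nm y ^+ 2.
Proof.
rewrite sqr_phinormD phinormZ normc_real exprMn real_normK ?num_real // dotpZr.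
by case: (dotp x y) => a b /=; ring.
Qed.

Lemma Re_dotp_le x y : Re (dotp x y) <= nm x * nm y.
Proof.
have : Re (dotp x y) ^+ 2 <= nm x ^+ 2 * nm y ^+ 2.
  apply: quadratic_ge0_discr; first exact: sqr_ge0.
  by move=> t; rewrite -sqr_phinorm_addZ sqr_ge0.
have := mulr_ge0 (phinorm_ge0 x) (phinorm_ge0 y); rewrite -exprMn; nra.
Qed.

Lemma normc_dotp_le x y : Normc.normc (dotp x y) <= nm x * nm y.
Proof.
have := Re_dotp_le x ((dotp x y)^*%C *: y).
rewrite dotpZr phinormZ normc_conj Re_conjM mulrCA expr2.
have [->|n_neq0] := eqVneq (Normc.normc (dotp x y)) 0.
  by rewrite mulr_ge0 ?phinorm_ge0.
by rewrite ler_pM2l // lt_neqAle eq_sym n_neq0 normc_ge0.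
Qed.

Lemma normc_phi_le x : Normc.normc (phi x) <= nm x.
Proof. by rewrite -dotp1l -[leRHS]mul1r -phinorm1 normc_dotp_le. Qed.

Lemma phinormD x y : nm (x + y) <= nm x + nm y.
Proof.
have := Re_dotp_le x y; have := sqr_phinormD x y.
have := phinorm_ge0 (x + y); have := phinorm_ge0 x; have := phinorm_ge0 y; nra.
Qed.

Lemma phinormB x y : nm (x - y) <= nm x + nm y.
Proof. by rewrite -[nm y]phinormN phinormD. Qed.

Lemma phinorm_sum (I : Type) (r : seq I) (P : pred I) (F : I -> A) :
  nm (\sum_(i <- r | P i) F i) <= \sum_(i <- r | P i) nm (F i).
Proof.
elim/big_rec2: _ => [|i y s _ le_ys]; first by rewrite phinorm0.
by apply: le_trans (phinormD _ _) _; rewrite lerD2l.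
Qed.

Lemma phinorm_parallelogram u v :
  nm (u + v) ^+ 2 + nm (u - v) ^+ 2 = 2 * nm u ^+ 2 + 2 * nm v ^+ 2.
Proof. by rewrite !sqr_phinormD phinormN dotpNr raddfN /=; ring. Qed.

Section Contraction.
Variable tau : A -> A.
Hypotheses (tau_linear : linear tau) (tau1 : tau 1 = 1).
Hypothesis tau_contraction :
  forall x, phi (star (tau x) * tau x) <= phi (star x * x).

HB.instance Definition _ := GRing.isLinear.Build C A A *:%R tau tau_linear.

Lemma sqr_phinorm_tau x : nm (tau x) ^+ 2 <= nm x ^+ 2.
Proof. by rewrite !sqr_phinorm; move: (tau_contraction x); rewrite lecE => /andP[]. Qed.

Lemma phinorm_tau x : nm (tau x) <= nm x.
Proof.
have := sqr_phinorm_tau x; have := phinorm_ge0 x.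
have := phinorm_ge0 (tau x); nra.
Qed.

Lemma Re_phi_tau x : Re (phi (tau x)) = Re (phi x).
Proof.
have tau_affine t : tau (1 + t%:C *: x) = 1 + t%:C *: tau x.
  by rewrite linearD linearZ /= tau1.
(* t |-> ||1 + t x||^2 - ||tau (1 + t x)||^2 is a nonnegative quadratic
   without constant term, so its linear coefficient vanishes. *)
apply/esym/eqP; rewrite -subr_eq0 -sqrf_eq0 eq_le sqr_ge0 andbT.
rewrite -[leRHS](mul0r (nm x ^+ 2 - nm (tau x) ^+ 2)).
apply: quadratic_ge0_discr => [|t]; first by rewrite subr_ge0 sqr_phinorm_tau.
have := sqr_phinorm_tau (1 + t%:C *: x); rewrite tau_affine.
by rewrite !sqr_phinorm_addZ phinorm1 !dotp1l; lra.
Qed.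

Lemma phi_tau x : phi (tau x) = phi x.
Proof.
(* Re (phi (-i z)) = Im (phi z). *)
have := Re_phi_tau (- 'i *: x); rewrite !linearZ /=.
case: (phi x) (phi (tau x)) (Re_phi_tau x) => [a b] [c d] /= ReE ImE.
by apply/eqP; rewrite eq_complex /= ReE eqxx /=; apply/eqP; lra.
Qed.

Lemma iter_tau_linear k : linear (iter k tau).
Proof. by elim: k => [//|k IH] c x y /=; rewrite IH linearP. Qed.
HB.instance Definition _ k :=
  GRing.isLinear.Build C A A *:%R (iter k tau) (iter_tau_linear k).

Lemma phinorm_iter k x : nm (iter k tau x) <= nm x.
Proof. by elim: k => [//|k IH]; rewrite iterS (le_trans (phinorm_tau _)). Qed.

Lemma phi_iter k x : phi (iter k tau x) = phi x.
Proof. by elim: k => [//|k IH]; rewrite iterS phi_tau. Qed.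

Lemma iter_tau_alg k c : iter k tau c%:A = c%:A.
Proof. by rewrite linearZ /=; congr (_ *: _); elim: k => [//|k IH]; rewrite iterS IH. Qed.

Definition avg n x := (n%:R^-1 : R)%:C *: \sum_(k < n) iter k tau x.

Lemma avg_linear n : linear (avg n).
Proof.
move=> c x y; rewrite /avg scalerA mulrC -scalerA -scalerDr; congr (_ *: _).
by rewrite scaler_sumr -big_split; apply: eq_bigr => k _; rewrite linearP.
Qed.
HB.instance Definition _ n := GRing.isLinear.Build C A A *:%R (avg n) (avg_linear n).

Lemma tau_avg n x : tau (avg n x) = avg n (tau x).
Proof. by rewrite linearZ linear_sum; congr (_ *: _); apply: eq_bigr => k _; rewrite -iterSr. Qed.

Lemma phi_avg n x : (0 < n)%N -> phi (avg n x) = phi x.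
Proof.
move=> n_gt0; rewrite linearZ linear_sum /=.
under eq_bigr do rewrite phi_iter.
by rewrite sumr_const card_ord; apply: scale_invn_muln.
Qed.

Lemma phinorm_avg n x : nm (avg n x) <= nm x.
Proof.
case: n => [|n]; first by rewrite /avg big_ord0 scaler0 phinorm0 ?phinorm_ge0.
have n_gt0 : 0 < n.+1%:R :> R by rewrite ltr0n.
rewrite phinorm_realZ ?invr_ge0 ?ler0n // ler_pdivrMl //.
apply: le_trans (phinorm_sum _ _ _) _.
rewrite mulr_natl -[X in _ *+ X]card_ord -sumr_const.
by apply: ler_sum => k _; apply: phinorm_iter.
Qed.

Lemma avg_tau_sub n x : avg n (tau x) - avg n x = (n%:R^-1 : R)%:C *: (iter n tau x - x).
Proof.
rewrite -scalerBr -sumrB; congr (_ *: _).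
under eq_bigr do rewrite -iterSr.
by rewrite -(big_mkord xpredT (fun k => iter k.+1 tau x - iter k tau x)) telescope_sumr.
Qed.

Definition avg_close K x y :=
  forall n, (0 < n)%N -> nm (avg n y - avg n x) <= K / n%:R.

Lemma avg_close_refl x : avg_close 0 x x.
Proof. by move=> n _; rewrite subrr phinorm0 // mul0r. Qed.

Lemma avg_close_le K K' x y : K <= K' -> avg_close K x y -> avg_close K' x y.
Proof.
move=> le_KK' close_xy n n_gt0; apply: le_trans (close_xy n n_gt0) _.
by rewrite ler_pM2r // invr_gt0 ltr0n.
Qed.

Lemma avg_close_tau K x y : avg_close K x y -> avg_close (K + 2 * nm y) x (tau y).
Proof.
move=> close_xy n n_gt0; have n_gt0' : 0 < n%:R :> R by rewrite ltr0n.
rewrite -[avg n (tau y)](subrK (avg n y)) -addrA mulrDl [leRHS]addrC.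
apply: le_trans (phinormD _ _) (lerD _ (close_xy n n_gt0)).
rewrite avg_tau_sub phinorm_realZ ?invr_ge0 ?ler0n // mulrC ler_pM2r ?invr_gt0 //.
apply: le_trans (phinormB _ _) _.
by have := phinorm_iter n y; lra.
Qed.

Lemma avg_close_iter k x : avg_close (2 * k%:R * nm x) x (iter k tau x).
Proof.
elim: k => [|k IH]; first by rewrite mulr0 mul0r; apply: avg_close_refl.
apply: avg_close_le (avg_close_tau IH).
by have := phinorm_iter k x; have := phinorm_ge0 x; rewrite -natr1; nra.
Qed.

Lemma avg_close_mean m K x (y : 'I_m -> A) : (0 < m)%N ->
  (forall i, avg_close K x (y i)) ->
  avg_close K x ((m%:R^-1 : R)%:C *: \sum_i y i).
Proof.
move=> m_gt0 close_xy n n_gt0; have m_gt0' : 0 < m%:R :> R by rewrite ltr0n.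
have -> : avg n ((m%:R^-1 : R)%:C *: \sum_i y i) - avg n x =
    (m%:R^-1 : R)%:C *: \sum_i (avg n (y i) - avg n x).
  by rewrite linearZ linear_sum sumrB scalerBr sumr_const card_ord scale_invn_muln.
rewrite phinorm_realZ ?invr_ge0 ?ler0n // ler_pdivrMl //.
apply: le_trans (phinorm_sum _ _ _) _.
rewrite mulr_natl -[X in _ *+ X]card_ord -sumr_const.
by apply: ler_sum => i _; apply: close_xy.
Qed.

Lemma avg_close_avg m x : (0 < m)%N -> avg_close (2 * m%:R * nm x) x (avg m x).
Proof.
move=> m_gt0; apply: avg_close_mean => // k.
apply: avg_close_le (avg_close_iter k x).
by rewrite ler_wpM2r ?phinorm_ge0 // ler_pM2l // ler_nat ltnW.
Qed.

Lemma avg_close_mid K1 K2 x y1 y2 : avg_close K1 x y1 -> avg_close K2 x y2 ->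
  avg_close ((K1 + K2) / 2) x ((2^-1 : R)%:C *: (y1 + y2)).
Proof.
move=> close1 close2 n n_gt0.
have -> : avg n ((2^-1 : R)%:C *: (y1 + y2)) - avg n x =
    (2^-1 : R)%:C *: ((avg n y1 - avg n x) + (avg n y2 - avg n x)).
  by rewrite addrACA -opprD -mulr2n scalerBr scale_invn_muln // linearZ linearD.
rewrite phinorm_realZ ?invr_ge0 ?ler0n //.
apply: le_trans (ler_wpM2l _ (phinormD _ _)) _; first by rewrite invr_ge0.
have := close1 n n_gt0; have := close2 n n_gt0; lra.
Qed.

Definition avg_close_set x : set A := [set y | exists K, avg_close K x y].

Section AvgCloseSetInf.
Variable x : A.
Let norms := [set nm y | y in avg_close_set x].

Lemma has_inf_avg_close_set : has_inf norms.
Proof.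
split; first by exists (nm x), x => //; exists 0; apply: avg_close_refl.
by exists 0 => _ [y _ <-]; apply: phinorm_ge0.
Qed.

Lemma inf_avg_close_set_le y : avg_close_set x y -> inf norms <= nm y.
Proof. by move=> xy; apply: ge_inf; [case: has_inf_avg_close_set | exists y]. Qed.

Lemma inf_avg_close_set_ge0 : 0 <= inf norms.
Proof. by apply: lb_le_inf; [case: has_inf_avg_close_set | move=> _ [y _ <-]; apply: phinorm_ge0]. Qed.

Lemma phinorm_avg_eventually_le d : 0 < d ->
  exists N, forall n, (N < n)%N -> nm (avg n x) <= inf norms + d.
Proof.
move=> d_gt0; have d2_gt0 : 0 < d / 2 by apply: divr_gt0.
have [_ [y [K close_xy] <-] y_lt] := inf_adherent d2_gt0 has_inf_avg_close_set.
have [N le_K] := eventually_div_le K d2_gt0.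
exists N => n ltNn; have n_gt0 : (0 < n)%N by apply: leq_ltn_trans ltNn.
have -> : avg n x = avg n y - (avg n y - avg n x) by rewrite opprB addrC subrK.
apply: le_trans (phinormB _ _) _.
have := phinorm_avg n y; have := close_xy n n_gt0; have := le_K n ltNn; lra.
Qed.

Lemma avg_cauchy e : 0 < e ->
  exists N, forall m n, (N < m)%N -> (N < n)%N -> nm (avg m x - avg n x) <= e.
Proof.
move=> e_gt0; set c := inf norms; have c_ge0 : 0 <= c := inf_avg_close_set_ge0.
set d := Num.min 1 (e ^+ 2 / (4 * (2 * c + 1))).
have d_gt0 : 0 < d by rewrite lt_min ltr01 divr_gt0 ?exprn_gt0 //; lra.
have d_le1 : d <= 1 by rewrite ge_min lexx.
have d_small : 4 * d * (2 * c + 1) <= e ^+ 2.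
  have : d <= e ^+ 2 / (4 * (2 * c + 1)) by rewrite ge_min lexx orbT.
  by rewrite ler_pdivlMr; [lra | lra].
have [N le_avg] := phinorm_avg_eventually_le d_gt0.
exists N => m n ltNm ltNn.
have [m_gt0 n_gt0] : (0 < m)%N /\ (0 < n)%N by split; lia.
have mid_ge : 2 * c <= nm (avg m x + avg n x).
  have mid_in : avg_close_set x ((2^-1 : R)%:C *: (avg m x + avg n x)).
    by eexists; exact: avg_close_mid (avg_close_avg x m_gt0) (avg_close_avg x n_gt0).
  have := inf_avg_close_set_le mid_in; rewrite phinorm_realZ ?invr_ge0 //; lra.
(* ||u - v||^2 = 2 ||u||^2 + 2 ||v||^2 - ||u + v||^2
               <= 4 (c + d)^2 - 4 c^2 <= 4 d (2 c + 1). *)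
have := phinorm_parallelogram (avg m x) (avg n x).
have := le_avg m ltNm; have := le_avg n ltNn.
have := phinorm_ge0 (avg m x); have := phinorm_ge0 (avg n x).
have := phinorm_ge0 (avg m x - avg n x); nra.
Qed.

End AvgCloseSetInf.

Lemma phi_mul_iter_avg a b n j : phi (a * iter j tau (avg n b)) =
  (n%:R^-1 : R)%:C * \sum_(i < n) phi (a * iter (j + i) tau b).
Proof.
rewrite linearZ /= -scalerAr linearZ linear_sum mulr_sumr linear_sum /=.
by congr (_ * _); apply: eq_bigr => i _; rewrite iterD.
Qed.

Lemma normc_phi_mul_iter_sub a y j (c : C) :
  Normc.normc (phi (a * iter j tau y) - phi a * c) <= nm (star a) * nm (y - c%:A).
Proof.
have -> : phi (a * iter j tau y) - phi a * c = dotp (star a) (iter j tau (y - c%:A)).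
  rewrite /dotp starK [iter _ _ (_ - _)]linearB /= iter_tau_alg mulrBr.
  by rewrite [phi (_ - _)]linearB /= mulr_algr [phi (_ *: _)]linearZ /= [c * _]mulrC.
apply: le_trans (normc_dotp_le _ _) _.
by rewrite ler_wpM2l ?phinorm_ge0 ?phinorm_iter.
Qed.

Lemma recurrence_in_window a b n j (eps : R) : (0 < n)%N ->
  nm (star a) * nm (avg n b - (phi b)%:A) < eps ->
  exists i : 'I_n, Normc.normc (phi a * phi b) - eps <
                   Normc.normc (phi (a * iter (j + i) tau b)).
Proof.
move=> n_gt0 close_b; apply: exists_normc_gt_mean => //; rewrite -phi_mul_iter_avg.
set w := phi (a * iter j tau (avg n b)).
have := normc_phi_mul_iter_sub a (avg n b) j (phi b).
have := le_normcD (phi a * phi b - w) w; rewrite subrK -[phi a * phi b - w]opprB normcN; lra.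
Qed.

Lemma avg_cvg_phi (tau_ergodic : ergodic star phi tau) b e : 0 < e ->
  exists N, forall n, (N < n)%N -> nm (avg n b - (phi b)%:A) <= e.
Proof.
have avg_tau_small e' : 0 < e' ->
    exists N, forall n, (N < n)%N -> nm (tau (avg n b) - avg n b) <= e'.
  move=> e'_gt0; have [N le_N] := eventually_div_le (2 * nm b) e'_gt0.
  exists N => n ltNn; have n_gt0 : (0 < n)%N by apply: leq_ltn_trans ltNn.
  rewrite tau_avg; apply: le_trans (le_N n ltNn).
  by have := avg_close_tau (avg_close_refl b) n_gt0; rewrite add0r.
have [alpha cvg_alpha] := tau_ergodic (avg^~ b) avg_tau_small (avg_cauchy b).
suff <- : alpha = phi b by exact: cvg_alpha.
apply/eqP; rewrite -subr_eq0; apply/eqP/Normc.eq0_normc/le_anti.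
rewrite normc_ge0 andbT; apply/ler_addgt0Pr => e' e'_gt0; rewrite add0r.
have [N le_N] := cvg_alpha e' e'_gt0; apply: le_trans (le_N N.+1 (ltnSn N)).
have -> : alpha - phi b = - phi (avg N.+1 b - alpha%:A).
  by rewrite linearB /= phi_avg // phi_alg opprB.
by rewrite normcN normc_phi_le.
Qed.

End Contraction.
End SemiInnerProduct.

Theorem theorem4p2 (R : realType) (A : algType R[i])
    (star : A -> A) (phi : A -> R[i]) (tau : A -> A)
    (Hdyn : is_star_dyn star phi tau) (Herg : ergodic star phi tau)
    (a b : A) (eps : R) (Heps : 0 < eps) :
  rel_dense_pos (fun k : nat =>
    (0 < k)%N /\
    cabs (phi (a * iter k tau b)) > cabs (phi a * phi b) - eps).
Proof.
case: Hdyn => star_inv phi_state [tauD tauZ] tau1 tau_contraction.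
have tau_linear : linear tau by move=> c x y; rewrite tauD tauZ.
set na := phinorm star phi (star a); have na_ge0 : 0 <= na := phinorm_ge0 _ _ _.
have [e e_gt0 small_e] : exists2 e, 0 < e & na * e < eps.
  exists (eps / (na + 1)); first by rewrite divr_gt0 //; lra.
  by rewrite mulrA ltr_pdivrMr; lra.
have [N close_N] :=
  avg_cvg_phi star_inv phi_state tau_linear tau1 tau_contraction Herg b e_gt0.
exists N.+1; split=> // j j_gt0.
have [i lt_i] := recurrence_in_window star_inv phi_state tau_linear tau1 tau_contraction
  j (ltn0Sn N) (le_lt_trans (ler_wpM2l na_ge0 (close_N N.+1 (ltnSn N))) small_e).
exists (j + i); split; first by rewrite addn_gt0 j_gt0.
by split; [exact: leq_addr | have := ltn_ord i; lia].
Qed.
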